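(* Let $\lambda$ be an infinite cardinal and let $\mu$ be a cardinal with $3\leq\mu\leq\lambda^+$. Then $\lambda^+\not\to_{hc}(\mu)^2_\lambda$: there is a coloring $c:[\lambda^+]^2\to\lambda$ such that for no $\xi<\lambda$ and no $X\subseteq\lambda^+$ with $|X|=\mu$ is the graph $(X,c^{-1}(\xi)\cap[X]^2)$ highly connected.
   Context: $[S]^2$ denotes the set of $2$-element subsets of $S$. A graph $G=(V,E)$ is highly connected if for every $D\subseteq V$ with $|D|<|V|$ the graph induced on $V\setminus D$ is connected. For cardinals $\nu,\mu,\lambda$, $\nu\to_{hc}(\mu)^2_\lambda$ means: for every $c:[\nu]^2\to\lambda$ there exist $\xi<\lambda$ and $X\subseteq\nu$ with $|X|=\mu$ such that $(X,c^{-1}(\xi)\cap[X]^2)$ is highly connected; $\not\to_{hc}$ is its negation. *)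

(* cardinals are represented by types, compared via injections. *)
From Stdlib Require Import Relations Relation_Operators Classical.

Definition card_le (A B : Type) : Prop :=
  exists f : A -> B, forall x y, f x = f y -> x = y.

Definition card_eq (A B : Type) : Prop :=
  exists f : A -> B, (forall x y, f x = f y -> x = y) /\ (forall y, exists x, f x = y).

Definition card_lt (A B : Type) : Prop := card_le A B /\ ~ card_le B A.

Definition infinite_type (A : Type) : Prop := card_le nat A.

Definition is_succ_card (L K : Type) : Prop :=
  card_lt L K /\ forall T : Type, card_lt T K -> card_le T L.

Definition subT {K : Type} (S : K -> Prop) : Type := { x : K | S x }.

Definition col_edge {K L : Type} (c : K -> K -> L) (xi : L) (V : K -> Prop)
  (x y : K) : Prop := V x /\ V y /\ x <> y /\ c x y = xi.

Definition col_connected {K L : Type} (c : K -> K -> L) (xi : L) (V : K -> Prop) : Prop :=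
  forall x y, V x -> V y -> clos_refl_trans K (col_edge c xi V) x y.

Definition highly_connected {K L : Type} (c : K -> K -> L) (xi : L) (V : K -> Prop) : Prop :=
  forall D : K -> Prop, (forall x, D x -> V x) ->
    card_lt (subT D) (subT V) ->
    col_connected c xi (fun x => V x /\ ~ D x).

(* Well-order lambda^+ so that every proper initial segment has size at most
   lambda, and colour a pair y < z by an injection of the segment below z into
   lambda.  Then every vertex has at most one smaller neighbour of each colour,
   so each colour class is a forest.  A vertex set with at least three elements
   stays connected after deleting at most one vertex if it is highly connected;
   but a connected forest on three vertices has a vertex with two neighbours,
   and deleting it separates them. *)

From Stdlib Require Import Relations Relation_Operators Classical.
From Stdlib Require Import ClassicalEpsilon ProofIrrelevance.
From mathcomp Require Import ssreflect ssrfun ssrbool eqtype.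
From mathcomp Require boolp wochoice.

Lemma proj1_sig_inj {K : Type} (P : K -> Prop) (s t : {x | P x}) :
  proj1_sig s = proj1_sig t -> s = t.
Proof. exact: eq_sig_hprop (fun x => proof_irrelevance (P x)) s t. Qed.

Lemma card_le_trans {A B C : Type} : card_le A B -> card_le B C -> card_le A C.
Proof. by move=> [f f_inj] [g g_inj]; exists (fun a => g (f a)) => x y /g_inj/f_inj. Qed.

Lemma card_le_lt_trans {A B C : Type} : card_le A B -> card_lt B C -> card_lt A C.
Proof.
move=> AB [BC not_CB]; split; first exact: card_le_trans BC.
by move=> CA; apply: not_CB; apply: card_le_trans AB.
Qed.

Lemma card_le_sig {K : Type} (P : K -> Prop) : card_le {x | P x} K.
Proof. by exists (@proj1_sig _ _) => s t /proj1_sig_inj. Qed.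

Section WellOrdering.
Import boolp wochoice.

Lemma exists_well_order (K : Type) : exists R : K -> K -> Prop,
  (forall x y, R x y -> R y x -> x = y) /\
  (forall A : K -> Prop, (exists x, A x) -> exists m, A m /\ forall x, A x -> R m x).
Proof.
have [R R_wo] := well_ordering_principle {classic K}.
have R_anti := wo_chain_antisymmetric (withinW (A := predT) R_wo).
exists R; split=> [x y Rxy Ryx|A [x Ax]].
  by apply: (R_anti x y isT isT); rewrite Rxy Ryx.
have [|m [[Am m_min] _]] := R_wo [pred z | `[< A z >]].
  by exists x; rewrite inE; apply/asboolP.
exists m; split; first by move: Am; rewrite inE => /asboolP.
by move=> y Ay; apply: m_min; rewrite inE; apply/asboolP.
Qed.

End WellOrdering.

Record strict_total_order {K : Type} (lt : K -> K -> Prop) : Prop := {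
  sto_irrefl : forall x, ~ lt x x;
  sto_trans : forall x y z, lt x y -> lt y z -> lt x z;
  sto_total : forall x y, x <> y -> lt x y \/ lt y x }.

Lemma strict_total_order_pullback {A B : Type} (h : A -> B) (lt : B -> B -> Prop) :
  (forall x y, h x = h y -> x = y) -> strict_total_order lt ->
  strict_total_order (fun x y => lt (h x) (h y)).
Proof.
move=> h_inj [irr tr tot]; split=> [x|x y z|x y neq]; [exact: irr | exact: tr |].
by apply: tot => /h_inj.
Qed.

Lemma card_le_segment_pullback {A B : Type} (h : A -> B) (lt : B -> B -> Prop) (y : A) :
  (forall x y, h x = h y -> x = y) ->
  card_le {x | lt (h x) (h y)} {z | lt z (h y)}.
Proof.
move=> h_inj; exists (fun s : {x | lt (h x) (h y)} =>
  exist (fun z => lt z (h y)) (h (proj1_sig s)) (proj2_sig s)).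
by move=> s t [/h_inj st]; apply: proj1_sig_inj.
Qed.

Lemma exists_strict_well_order (K : Type) : exists lt : K -> K -> Prop,
  strict_total_order lt /\
  forall A : K -> Prop, (exists x, A x) -> exists m, A m /\ forall x, A x -> ~ lt x m.
Proof.
have [R [R_anti R_min]] := exists_well_order K.
have R_total x y : R x y \/ R y x.
  have [m [[->|->] m_min]] := R_min (fun z => z = x \/ z = y) (ex_intro _ x (or_introl erefl)).
    by left; apply: m_min; right.
  by right; apply: m_min; left.
exists (fun x y => R x y /\ x <> y); split.
  split=> [x [_ //]|x y z [Rxy nxy] [Ryz nyz]|x y nxy].
  - split; last by move=> xz; subst z; apply: nxy; apply: R_anti.
    have [m [Em m_min]] :=
      R_min (fun w => w = x \/ w = y \/ w = z) (ex_intro _ x (or_introl erefl)).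
    case: Em => [Em|[Em|Em]]; subst m; first by apply: m_min; right; right.
      by case: nxy; apply: R_anti => //; apply: m_min; left.
    by case: nyz; apply: R_anti => //; apply: m_min; right; left.
  - by case: (R_total x y) => ?; [left | right]; split=> // eq; apply: nxy.
move=> A /R_min [m [Am m_min]]; exists m; split=> // x Ax [Rxm nxm].
by apply: nxm; apply: R_anti => //; apply: m_min.
Qed.

(* Pull the well order back along an injection of K into its first initial
   segment that is not of smaller cardinality than K, if there is one. *)
Lemma exists_order_small_segments (K : Type) : exists lt : K -> K -> Prop,
  strict_total_order lt /\ forall y, card_lt {x | lt x y} K.
Proof.
have [lt [lt_sto lt_min]] := exists_strict_well_order K.
case: (classic (forall y, card_lt {x | lt x y} K)) => [small|/not_all_ex_not big].
  by exists lt.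
have [m [m_big m_min]] := lt_min _ big.
have [g g_inj] : card_le K {x | lt x m}.
  by apply: NNPP => not_le; apply: m_big; split; [exact: card_le_sig | exact: not_le].
pose h x := proj1_sig (g x).
have h_inj x y : h x = h y -> x = y by move/proj1_sig_inj/g_inj.
exists (fun x y => lt (h x) (h y)); split; first exact: strict_total_order_pullback.
move=> y; apply: (card_le_lt_trans (card_le_segment_pullback h lt y h_inj)).
by apply: NNPP => not_small; apply: (m_min (h y) not_small); exact: proj2_sig (g y).
Qed.

Lemma succ_card_order {L K : Type} : is_succ_card L K ->
  exists lt : K -> K -> Prop, strict_total_order lt /\ forall y, card_le {x | lt x y} L.
Proof.
move=> [_ K_least]; have [lt [lt_sto lt_small]] := exists_order_small_segments K.
by exists lt; split=> // y; apply: K_least.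
Qed.

Lemma card_le_sig_extend {K L : Type} (P : K -> Prop) (l0 : L) :
  card_le {x | P x} L -> exists f : K -> L, forall x y, P x -> P y -> f x = f y -> x = y.
Proof.
move=> [g g_inj].
exists (fun x => if excluded_middle_informative (P x) is left Px then g (exist _ x Px) else l0).
move=> x y Px Py; case: excluded_middle_informative => // Px'.
case: excluded_middle_informative => // Py' /g_inj.
by move/(f_equal (@proj1_sig _ _)).
Qed.

(* Colour an edge by the position of its lower end inside the segment below its
   upper end: then no vertex has two lower neighbours of the same colour. *)
Lemma exists_colouring_injective_below {K L : Type} (lt : K -> K -> Prop) (l0 : L) :
  strict_total_order lt -> (forall y, card_le {x | lt x y} L) ->
  exists c : K -> K -> L, (forall x y, c x y = c y x) /\
    forall y1 y2 z, lt y1 z -> lt y2 z -> c y1 z = c y2 z -> y1 = y2.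
Proof.
move=> [irr tr tot] small.
have [e e_inj] : exists e : K -> K -> L,
    forall z y1 y2, lt y1 z -> lt y2 z -> e z y1 = e z y2 -> y1 = y2.
  apply: (choice (fun z (f : K -> L) =>
    forall y1 y2, lt y1 z -> lt y2 z -> f y1 = f y2 -> y1 = y2)) => z.
  exact: card_le_sig_extend l0 (small z).
pose c x y := if excluded_middle_informative (lt x y) then e y x else e x y.
have c_lt x y : lt x y -> c x y = e y x.
  by rewrite /c; case: excluded_middle_informative.
have c_gt x y : lt y x -> c x y = e x y.
  rewrite /c; case: excluded_middle_informative => // xy yx.
  by case: (irr x); apply: tr yx.
exists c; split=> [x y|y1 y2 z y1z y2z]; last by rewrite !c_lt //; apply: e_inj.
case: (classic (x = y)) => [-> //|/tot [xy|yx]].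
- by rewrite c_lt // c_gt.
- by rewrite c_gt // c_lt.
Qed.

Lemma clos_rt_invariant {K : Type} (R : relation K) (P : K -> Prop) :
  (forall x y, R x y -> P x -> P y) ->
  forall x y, clos_refl_trans K R x y -> P x -> P y.
Proof.
move=> R_P x y; elim=> [u v Ruv|//|u v w _ IHuv _ IHvw Pu].
  exact: R_P.
exact: IHvw (IHuv Pu).
Qed.

Lemma clos_rt_first_step {K : Type} {R : relation K} {x y : K} :
  clos_refl_trans K R x y -> x <> y -> exists z, R x z.
Proof.
move=> /(clos_rt_rt1n K R x y) xy; destruct xy as [|z w Rxz _]; first by [].
by exists z.
Qed.

Lemma three_distinct_avoid_two {K : Type} (a b d u v : K) :
  a <> b -> a <> d -> b <> d ->
  exists t, (t = a \/ t = b \/ t = d) /\ t <> u /\ t <> v.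
Proof.
move=> ab ad bd.
case: (classic (a = u \/ a = v)) => [a_uv|]; last by exists a; tauto.
case: (classic (b = u \/ b = v)) => [b_uv|]; last by exists b; tauto.
by exists d; split; [tauto | split=> d_eq; subst d; intuition congruence].
Qed.

Section UniqueLowerNeighbour.

Context {K : Type} (lt adj : K -> K -> Prop).
Hypothesis lt_irrefl : forall x, ~ lt x x.
Hypothesis lt_trans : forall {x y z}, lt x y -> lt y z -> lt x z.
Hypothesis lt_total : forall {x y}, x <> y -> lt x y \/ lt y x.
Hypothesis adj_sym : forall {x y}, adj x y -> adj y x.
Hypothesis adj_irrefl : forall x, ~ adj x x.
Hypothesis lower_adj_uniq :
  forall {y1 y2 z}, lt y1 z -> lt y2 z -> adj y1 z -> adj y2 z -> y1 = y2.

Definition edge_in (V : K -> Prop) (x y : K) : Prop := V x /\ V y /\ adj x y.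

Definition connected (V : K -> Prop) : Prop :=
  forall x y, V x -> V y -> clos_refl_trans K (edge_in V) x y.

Definition two_connected (X : K -> Prop) : Prop :=
  forall D : K -> Prop, (forall x y, D x -> D y -> x = y) -> (forall x, D x -> X x) ->
    connected (fun x => X x /\ ~ D x).

Definition ascent (u : K) : K -> Prop := clos_refl_trans K (fun y z => lt y z /\ adj y z) u.

Lemma ascent_ge {u z} : ascent u z -> z = u \/ lt u z.
Proof.
elim=> [x y [] | x | x y w _ IHxy _ IHyw]; [by right | by left |].
case: IHxy IHyw => [-> //|ux] [->|yw]; [by right | by right; exact: lt_trans ux yw].
Qed.

Lemma ascent_last {u z} : ascent u z -> z = u \/ exists y, ascent u y /\ lt y z /\ adj y z.
Proof.
move=> /(clos_rt_rtn1 K _ u z) uz; destruct uz as [|y z [yz adj_yz] uy]; first by left.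
by right; exists y; split=> //; apply: clos_rtn1_rt.
Qed.

(* Away from the lower neighbour [v] of [u], the only edge leaving a vertex
   downwards is the one it was reached by, so ascents from [u] cannot be left. *)
Lemma ascent_closed {W : K -> Prop} {u v} : lt v u -> adj v u -> ~ W v ->
  forall x y, clos_refl_trans K (edge_in W) x y -> ascent u x -> ascent u y.
Proof.
move=> vu adj_vu Wv; apply: clos_rt_invariant => x y [_ [Wy adj_xy]] ux.
have xy : x <> y by move=> eq; subst y; apply: (adj_irrefl x).
case: (lt_total xy) => [lt_xy | lt_yx]; first by apply: rt_trans ux (rt_step _ _ _ _ _).
case: (ascent_last ux) => [eq | [w [uw [wx adj_wx]]]].
- by subst x; case: Wv; rewrite -(lower_adj_uniq lt_yx vu (adj_sym adj_xy) adj_vu).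
- by rewrite (lower_adj_uniq lt_yx wx (adj_sym adj_xy) adj_wx).
Qed.

Lemma cut_vertex_separates (W : K -> Prop) {u v w} :
  lt v u -> adj v u -> adj v w -> w <> u -> ~ W v ->
  ~ clos_refl_trans K (edge_in W) u w.
Proof.
move=> vu adj_vu adj_vw wu Wv /(ascent_closed vu adj_vu Wv)/(_ (rt_refl _ _ _)) uw.
have vw : v <> w by move=> eq; subst w; apply: (adj_irrefl v).
case: (lt_total vw) => [lt_vw | lt_wv].
- case: (ascent_last uw) => [// | [y [uy [yw adj_yw]]]].
  have eq_yv := lower_adj_uniq yw lt_vw adj_yw adj_vw; subst y.
  case: (ascent_ge uy) => [eq | uv]; first by subst v; apply: (lt_irrefl u).
  exact: lt_irrefl u (lt_trans uv vu).
- case: (ascent_ge uw) => [// | uw'].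
  exact: lt_irrefl u (lt_trans (lt_trans uw' lt_wv) vu).
Qed.

Lemma not_two_connected (X : K -> Prop) (a b d : K) :
  X a -> X b -> X d -> a <> b -> a <> d -> b <> d -> ~ two_connected X.
Proof.
move=> Xa Xb Xd ab ad bd X_conn.
have conn : connected (fun x => X x /\ ~ False) by apply: X_conn.
have no_cut u v w : X u -> X v -> X w -> lt v u -> adj v u -> adj v w -> w <> u -> False.
  move=> Xu Xv Xw vu adj_vu adj_vw wu.
  have [|] := cut_vertex_separates (fun x => X x /\ x <> v) vu adj_vu adj_vw wu.
    by move=> [].
  apply: (X_conn (fun x => x = v)) => [x y -> -> // | x -> // | |].
    by split=> // eq; subst v; apply: (lt_irrefl u).
  by split=> // eq; subst w; apply: (adj_irrefl v).
have [u [v [Xu [Xv [vu adj_vu]]]]] : exists u v, X u /\ X v /\ lt v u /\ adj v u.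
  have [z [_ [[Xz _] adj_az]]] := clos_rt_first_step (conn a b (conj Xa id) (conj Xb id)) ab.
  have az : a <> z by move=> eq; subst z; apply: (adj_irrefl a).
  case: (lt_total az) => [lt_az | lt_za]; first by exists z, a.
  by exists a, z; do !split=> //; apply: adj_sym.
case: (classic (exists w, X w /\ w <> u /\ adj v w)) => [[w [Xw [wu adj_vw]]]|no_v].
  exact: no_cut u v w Xu Xv Xw vu adj_vu adj_vw wu.
case: (classic (exists w, X w /\ w <> v /\ adj u w)) => [[w [Xw [wv adj_uw]]]|no_u].
  have uw : u <> w by move=> eq; subst w; apply: (adj_irrefl u).
  case: (lt_total uw) => [lt_uw | lt_wu].
    exact: no_cut w u v Xw Xu Xv lt_uw adj_uw (adj_sym adj_vu) (not_eq_sym wv).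
  exact: wv (lower_adj_uniq lt_wu vu (adj_sym adj_uw) adj_vu).
have [t [t_abd [tu tv]]] := three_distinct_avoid_two a b d u v ab ad bd.
have Xt : X t by case: t_abd => [->|[->|->]].
have uv_closed : forall x y, clos_refl_trans K (edge_in (fun x => X x /\ ~ False)) x y ->
    x = u \/ x = v -> y = u \/ y = v.
  apply: clos_rt_invariant => x y [_ [[Xy _] adj_xy]] [x_u|x_v]; apply: NNPP => y_uv.
  - by subst x; apply: no_u; exists y; split=> //; split; [tauto|].
  - by subst x; apply: no_v; exists y; split=> //; split; [tauto|].
by case: (uv_closed u t (conn u t (conj Xu id) (conj Xt id)) (or_introl erefl)).
Qed.

End UniqueLowerNeighbour.

Lemma card_lt_subsingleton {K : Type} (D X : K -> Prop) (a b : K) :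
  (forall x y, D x -> D y -> x = y) -> (forall x, D x -> X x) ->
  X a -> X b -> a <> b -> card_lt (subT D) (subT X).
Proof.
move=> D_uniq DX Xa Xb ab; split.
  exists (fun s : subT D => exist X (proj1_sig s) (DX _ (proj2_sig s))).
  by move=> s t [/proj1_sig_inj].
move=> [f f_inj]; apply: ab.
suff /f_inj [] : f (exist X a Xa) = f (exist X b Xb) by [].
by apply: proj1_sig_inj; apply: D_uniq; apply: proj2_sig.
Qed.

Lemma card_eq_three_distinct {K M : Type} {X : K -> Prop} :
  card_eq (subT X) M -> (exists a b d : M, a <> b /\ a <> d /\ b <> d) ->
  exists a b d : K, X a /\ X b /\ X d /\ a <> b /\ a <> d /\ b <> d.
Proof.
move=> [f [_ f_surj]] [a [b [d [ab [ad bd]]]]].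
have f_ne s t : f s <> f t -> proj1_sig s <> proj1_sig t.
  by move=> fst /proj1_sig_inj st; apply: fst; rewrite st.
have [[x Xx] fx] := f_surj a; have [[y Xy] fy] := f_surj b; have [[z Xz] fz] := f_surj d.
exists x, y, z; do !split=> //.
- by apply: (f_ne (exist _ x Xx) (exist _ y Xy)); rewrite fx fy.
- by apply: (f_ne (exist _ x Xx) (exist _ z Xz)); rewrite fx fz.
- by apply: (f_ne (exist _ y Xy) (exist _ z Xz)); rewrite fy fz.
Qed.

Lemma highly_connected_two_connected {K L : Type} (c : K -> K -> L) (xi : L)
    (X : K -> Prop) (a b : K) :
  X a -> X b -> a <> b -> highly_connected c xi X ->
  two_connected (fun x y => x <> y /\ c x y = xi) X.
Proof.
move=> Xa Xb ab hc D D_uniq DX.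
exact (hc D DX (card_lt_subsingleton D X a b D_uniq DX Xa Xb ab)).
Qed.

Theorem mainTheorem3 (L K M : Type)
  (hL : infinite_type L) (hK : is_succ_card L K)
  (hM3 : exists a b d : M, a <> b /\ a <> d /\ b <> d)
  (hMK : card_le M K) :
  exists c : K -> K -> L, (forall x y, c x y = c y x) /\
    forall (xi : L) (X : K -> Prop),
      card_eq (subT X) M -> ~ highly_connected c xi X.
Proof.
have [lt [lt_sto lt_small]] := succ_card_order hK.
have [f0 _] := hL.
have [c [c_sym c_inj]] := exists_colouring_injective_below lt (f0 0) lt_sto lt_small.
exists c; split=> // xi X XM hc.
have [a [b [d [Xa [Xb [Xd [ab [ad bd]]]]]]]] := card_eq_three_distinct XM hM3.
have [lt_irrefl lt_trans lt_total] := lt_sto.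
apply: (not_two_connected lt (fun x y => x <> y /\ c x y = xi) lt_irrefl lt_trans lt_total
  _ _ _ X a b d Xa Xb Xd ab ad bd).
- by move=> x y [xy cxy]; split; [exact: not_eq_sym | rewrite c_sym].
- by move=> x [].
- move=> y1 y2 z y1z y2z [_ c1] [_ c2].
  by apply: (c_inj _ _ _ y1z y2z); rewrite c1 c2.
- exact: highly_connected_two_connected Xa Xb ab hc.
Qed.
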